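(* Let $\mathbf Z$ be the full subcategory of monoidal categories that are monoidally equivalent to the terminal monoidal category $\mathbf 1$ (equivalently, monoidal categories in which between any two objects there is exactly one morphism). Then $\mathbf Z$ is a reflective and coreflective subcategory both of the category $\mathbf{MC}$ of small monoidal categories and strong monoidal functors, and of the category $\mathbf{SMC}$ of small symmetric monoidal categories and symmetric strong monoidal functors. For every monoidal category $\mathcal M$, the functor $\eta_{\mathcal M}\colon\mathcal M\to R(\mathcal M)$ is the reflection of $\mathcal M$ into $\mathbf Z$ and the functor $\epsilon_{\mathcal M}\colon S(\mathcal M)\to\mathcal M$ is the coreflection of $\mathcal M$ into $\mathbf Z$.
   Context: Let $(\mathcal M,\otimes,I,a,\ell,r)$ be a monoidal category. $R(\mathcal M)$ is the monoidal category with the same objects as $\mathcal M$, exactly one morphism between any two objects, tensor product on objects as in $\mathcal M$ and unit $I$; $\eta_{\mathcal M}\colon\mathcal M\to R(\mathcal M)$ is the unique functor which is the identity on objects (it is strong monoidal, and symmetric when $\mathcal M$ is symmetric). $S(\mathcal M)$ is the monoidal category whose objects are pairs $(X,x)$ with $X$ an object of $\mathcal M$ and $x\colon X\to I$ an isomorphism; a morphism $(X,x)\to(Y,y)$ is a morphism $f\colon X\to Y$ of $\mathcal M$ with $y\circ f=x$ (so it is uniquely $y^{-1}x$); composition and identities as in $\mathcal M$; $(X,x)\otimes(Y,y)=(X\otimes Y,\ \ell_I\circ(x\otimes y))$ where $\ell_I=r_I\colon I\otimes I\to I$; tensor of morphisms as in $\mathcal M$; unit $(I,\mathrm{id}_I)$;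 associators and unitors as in $\mathcal M$. $\epsilon_{\mathcal M}\colon S(\mathcal M)\to\mathcal M$ sends $(X,x)\mapsto X$ and $f\mapsto f$ (strong monoidal, symmetric when $\mathcal M$ is symmetric). All categories are regarded as 1-categories. *)

From Stdlib Require Import ProofIrrelevance.

Set Implicit Arguments.
Unset Strict Implicit.

Record Cat := {
  ob :> Type;
  hom : ob -> ob -> Type;
  idm : forall X, hom X X;
  comp : forall {X Y Z}, hom Y Z -> hom X Y -> hom X Z;
  comp_idl : forall X Y (f : hom X Y), comp (idm Y) f = f;
  comp_idr : forall X Y (f : hom X Y), comp f (idm X) = f;
  comp_assoc : forall W X Y Z (h : hom Y Z) (g : hom X Y) (f : hom W X),
      comp h (comp g f) = comp (comp h g) f }.

Arguments hom {c} _ _.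
Arguments idm {c} X.
Arguments comp {c X Y Z} _ _.

Notation "g ∘ f" := (comp g f) (at level 40, left associativity).

Definition is_iso (C : Cat) (X Y : C) (f : hom X Y) : Prop :=
  exists g : hom Y X, g ∘ f = idm X /\ f ∘ g = idm Y.

Definition tr (C : Cat) (A A' B B' : C) (ea : A = A') (eb : B = B')
  (f : hom A B) : hom A' B' :=
  match ea in _ = A1, eb in _ = B1 return hom A1 B1 with
  | eq_refl, eq_refl => f end.

(* Monoidal categories.  Besides pentagon and triangle we include
   Mac Lane's original axiom l_I = r_I (redundant by Kelly 1964, so the
   class of monoidal categories is unchanged).                          *)

Record MonCat := {
  mcat :> Cat;
  tens : mcat -> mcat -> mcat;
  tensf : forall {X X' Y Y' : mcat}, hom X X' -> hom Y Y' ->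
            hom (tens X Y) (tens X' Y');
  tens_id : forall X Y : mcat, tensf (idm X) (idm Y) = idm (tens X Y);
  tens_comp : forall (X X' X'' Y Y' Y'' : mcat) (f : hom X X') (f' : hom X' X'')
      (g : hom Y Y') (g' : hom Y' Y''),
      tensf (f' ∘ f) (g' ∘ g) = tensf f' g' ∘ tensf f g;
  munit : mcat;
  assoc : forall X Y Z : mcat, hom (tens (tens X Y) Z) (tens X (tens Y Z));
  assoc_iso : forall X Y Z, is_iso (assoc X Y Z);
  assoc_nat : forall (X X' Y Y' Z Z' : mcat) (f : hom X X') (g : hom Y Y')
      (h : hom Z Z'),
      assoc X' Y' Z' ∘ tensf (tensf f g) h = tensf f (tensf g h) ∘ assoc X Y Z;
  lu : forall X : mcat, hom (tens munit X) X;
  lu_iso : forall X, is_iso (lu X);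
  lu_nat : forall (X Y : mcat) (f : hom X Y), f ∘ lu X = lu Y ∘ tensf (idm munit) f;
  ru : forall X : mcat, hom (tens X munit) X;
  ru_iso : forall X, is_iso (ru X);
  ru_nat : forall (X Y : mcat) (f : hom X Y), f ∘ ru X = ru Y ∘ tensf f (idm munit);
  pentagon : forall W X Y Z : mcat,
      tensf (idm W) (assoc X Y Z) ∘ assoc W (tens X Y) Z ∘ tensf (assoc W X Y) (idm Z)
      = assoc W X (tens Y Z) ∘ assoc (tens W X) Y Z;
  triangle : forall X Y : mcat,
      tensf (idm X) (lu Y) ∘ assoc X munit Y = tensf (ru X) (idm Y);
  lu_ru_unit : lu munit = ru munit }.

Arguments tens {m} _ _.
Arguments tensf {m X X' Y Y'} _ _.
Arguments munit m : clear implicits.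
Arguments assoc {m} X Y Z.
Arguments lu {m} X.
Arguments ru {m} X.

Notation "X ⊗ Y" := (tens X Y) (at level 35, right associativity).
Notation "f ⊗m g" := (tensf f g) (at level 35, right associativity).

Record SymMonCat := {
  smc :> MonCat;
  braid : forall X Y : smc, hom (X ⊗ Y) (Y ⊗ X);
  braid_nat : forall (X X' Y Y' : smc) (f : hom X X') (g : hom Y Y'),
      braid X' Y' ∘ (f ⊗m g) = (g ⊗m f) ∘ braid X Y;
  braid_invol : forall X Y : smc, braid Y X ∘ braid X Y = idm (X ⊗ Y);
  hexagon : forall X Y Z : smc,
      assoc Y Z X ∘ braid X (Y ⊗ Z) ∘ assoc X Y Z
      = (idm Y ⊗m braid X Z) ∘ assoc Y X Z ∘ (braid X Y ⊗m idm Z);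
  braid_unit : forall X : smc, ru X = lu X ∘ braid X (munit smc) }.

Arguments braid {s} X Y.

Record MonFun (M N : MonCat) := {
  fob : M -> N;
  fmap : forall X Y : M, hom X Y -> hom (fob X) (fob Y);
  fmap_id : forall X : M, fmap (idm X) = idm (fob X);
  fmap_comp : forall (X Y Z : M) (g : hom Y Z) (f : hom X Y),
      fmap (g ∘ f) = fmap g ∘ fmap f;
  fmu : forall X Y : M, hom (fob X ⊗ fob Y) (fob (X ⊗ Y));
  fmu_iso : forall X Y, is_iso (fmu X Y);
  fmu_nat : forall (X X' Y Y' : M) (f : hom X X') (g : hom Y Y'),
      fmap (f ⊗m g) ∘ fmu X Y = fmu X' Y' ∘ (fmap f ⊗m fmap g);
  feps : hom (munit N) (fob (munit M));
  feps_iso : is_iso feps;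
  fassoc : forall X Y Z : M,
      fmap (assoc X Y Z) ∘ fmu (X ⊗ Y) Z ∘ (fmu X Y ⊗m idm (fob Z))
      = fmu X (Y ⊗ Z) ∘ (idm (fob X) ⊗m fmu Y Z) ∘ assoc (fob X) (fob Y) (fob Z);
  flu : forall X : M,
      fmap (lu X) ∘ fmu (munit M) X ∘ (feps ⊗m idm (fob X)) = lu (fob X);
  fru : forall X : M,
      fmap (ru X) ∘ fmu X (munit M) ∘ (idm (fob X) ⊗m feps) = ru (fob X) }.

Arguments fob {M N} m _.
Arguments fmap {M N} m {X Y} _.
Arguments fmu {M N} m X Y.
Arguments feps {M N} m.

Definition is_sym (M N : SymMonCat) (F : MonFun M N) : Prop :=
  forall X Y : M, fmap F (braid X Y) ∘ fmu F X Y = fmu F Y X ∘ braid (fob F X) (fob F Y).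

(* Equality (in the 1-category MC) of a strong monoidal functor H with a
   strong monoidal functor given by its data (F0, F1, mu, e0):
   equal object maps, and equal morphism maps / structure maps
   (after transport along the object equalities). *)
Definition mf_eq_data (M N : MonCat) (F0 : M -> N)
  (F1 : forall X Y : M, hom X Y -> hom (F0 X) (F0 Y))
  (mu : forall X Y : M, hom (F0 X ⊗ F0 Y) (F0 (X ⊗ Y)))
  (e0 : hom (munit N) (F0 (munit M))) (H : MonFun M N) : Prop :=
  exists e : forall X : M, F0 X = fob H X,
    (forall (X Y : M) (f : hom X Y), tr (e X) (e Y) (F1 X Y f) = fmap H f) /\
    (forall X Y : M,
        tr (f_equal2 (@tens N) (e X) (e Y)) (e (X ⊗ Y)) (mu X Y) = fmu H X Y) /\
    tr eq_refl (e (munit M)) e0 = feps H.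

Arguments mf_eq_data {M N} F0 F1 mu e0 H.

Definition mf_eq (M N : MonCat) (F H : MonFun M N) : Prop :=
  mf_eq_data (fob F) (fun X Y f => fmap F f) (fmu F) (feps F) H.

Definition mf_comp_eq (L M N : MonCat) (G : MonFun M N) (F : MonFun L M)
  (H : MonFun L N) : Prop :=
  mf_eq_data (fun X => fob G (fob F X)) (fun X Y f => fmap G (fmap F f))
    (fun X Y => fmap G (fmu F X Y) ∘ fmu G (fob F X) (fob F Y))
    (fmap G (feps F) ∘ feps G) H.

Definition inZ (M : MonCat) : Prop :=
  forall X Y : M, inhabited (hom X Y) /\ forall f g : hom X Y, f = g.

Definition is_reflection (M Rm : MonCat) (eta : MonFun M Rm) : Prop :=
  inZ Rm /\
  forall Z : MonCat, inZ Z -> forall F : MonFun M Z,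
    (exists G : MonFun Rm Z, mf_comp_eq G eta F) /\
    (forall G G' : MonFun Rm Z, mf_comp_eq G eta F -> mf_comp_eq G' eta F -> mf_eq G G').

Definition is_coreflection (M Sm : MonCat) (eps : MonFun Sm M) : Prop :=
  inZ Sm /\
  forall Z : MonCat, inZ Z -> forall F : MonFun Z M,
    (exists G : MonFun Z Sm, mf_comp_eq eps G F) /\
    (forall G G' : MonFun Z Sm, mf_comp_eq eps G F -> mf_comp_eq eps G' F -> mf_eq G G').

Definition is_sym_reflection (M Rm : SymMonCat) (eta : MonFun M Rm) : Prop :=
  is_sym eta /\ inZ Rm /\
  forall Z : SymMonCat, inZ Z -> forall F : MonFun M Z, is_sym F ->
    (exists G : MonFun Rm Z, is_sym G /\ mf_comp_eq G eta F) /\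
    (forall G G' : MonFun Rm Z, is_sym G -> is_sym G' ->
       mf_comp_eq G eta F -> mf_comp_eq G' eta F -> mf_eq G G').

Definition is_sym_coreflection (M Sm : SymMonCat) (eps : MonFun Sm M) : Prop :=
  is_sym eps /\ inZ Sm /\
  forall Z : SymMonCat, inZ Z -> forall F : MonFun Z M, is_sym F ->
    (exists G : MonFun Z Sm, is_sym G /\ mf_comp_eq eps G F) /\
    (forall G G' : MonFun Z Sm, is_sym G -> is_sym G' ->
       mf_comp_eq eps G F -> mf_comp_eq eps G' F -> mf_eq G G').

Ltac kill_units :=
  repeat match goal with u : Datatypes.unit |- _ => destruct u end.

Definition Rcat (M : MonCat) : Cat.
Proof.
  refine {| ob := ob M; hom := fun _ _ => Datatypes.unit; idm := fun _ => tt;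
            comp := fun _ _ _ _ _ => tt |}; intros; kill_units; reflexivity.
Defined.

Lemma R_iso (M : MonCat) (X Y : Rcat M) (f : hom X Y) : is_iso f.
Proof. exists tt; split; destruct f; reflexivity. Qed.

Definition R (M : MonCat) : MonCat.
Proof.
  refine {| mcat := Rcat M; tens := fun X Y : M => X ⊗ Y;
            tensf := fun _ _ _ _ _ _ => tt; munit := munit M;
            assoc := fun _ _ _ => tt; lu := fun _ => tt; ru := fun _ => tt |};
  intros; kill_units; try reflexivity; apply R_iso.
Defined.

Definition eta (M : MonCat) : MonFun M (R M).
Proof.
  refine {| fob := fun X : M => (X : R M); fmap := fun _ _ _ => tt;
            fmu := fun _ _ => tt; feps := tt |};
  intros; kill_units; try reflexivity; apply R_iso.
Defined.

Definition RS (M : SymMonCat) : SymMonCat.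
Proof.
  refine {| smc := R M; braid := fun _ _ => tt |};
  intros; kill_units; reflexivity.
Defined.

Lemma sig_eq (A : Type) (P : A -> Prop) (a b : sig P) :
  proj1_sig a = proj1_sig b -> a = b.
Proof.
  destruct a as [a pa], b as [b pb]; simpl; intros ->; f_equal;
  apply proof_irrelevance.
Qed.

Lemma iso_comp (C : Cat) (X Y Z : C) (g : hom Y Z) (f : hom X Y) :
  is_iso g -> is_iso f -> is_iso (g ∘ f).
Proof.
  intros [g' [H1 H2]] [f' [H3 H4]]; exists (f' ∘ g'); split.
  - rewrite <- comp_assoc, (comp_assoc g' g f), H1, comp_idl; exact H3.
  - rewrite <- comp_assoc, (comp_assoc f f' g'), H4, comp_idl; exact H2.
Qed.

Lemma iso_tens (M : MonCat) (X X' Y Y' : M) (f : hom X X') (g : hom Y Y') :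
  is_iso f -> is_iso g -> is_iso (f ⊗m g).
Proof.
  intros [f' [H1 H2]] [g' [H3 H4]]; exists (f' ⊗m g'); split;
  rewrite <- tens_comp; [rewrite H1, H3 | rewrite H2, H4]; apply tens_id.
Qed.

Lemma iso_id (C : Cat) (X : C) : is_iso (idm X).
Proof. exists (idm X); split; apply comp_idl. Qed.

Definition Sob (M : MonCat) : Type :=
  { X : M & { x : hom X (munit M) | is_iso x } }.

Definition Sx (M : MonCat) (A : Sob M) : hom (projT1 A) (munit M) :=
  proj1_sig (projT2 A).

Definition Shom (M : MonCat) (A B : Sob M) : Type :=
  { f : hom (projT1 A) (projT1 B) | Sx B ∘ f = Sx A }.

Definition Sid (M : MonCat) (A : Sob M) : Shom A A :=
  exist _ (idm _) (comp_idr _).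

Definition Scomp (M : MonCat) (A B C : Sob M) (g : Shom B C) (f : Shom A B) :
  Shom A C.
Proof.
  exists (proj1_sig g ∘ proj1_sig f).
  rewrite comp_assoc, (proj2_sig g); exact (proj2_sig f).
Defined.

Definition Scat (M : MonCat) : Cat.
Proof.
  refine {| ob := Sob M; hom := @Shom M; idm := @Sid M; comp := @Scomp M |};
  intros; apply sig_eq; simpl;
  [apply comp_idl | apply comp_idr | apply comp_assoc].
Defined.

Definition Shom_of (M : MonCat) (A B : Sob M) (f : hom (projT1 A) (projT1 B))
  (H : Sx B ∘ f = Sx A) : hom (c := Scat M) A B := exist _ f H.

Lemma S_iso (M : MonCat) (A B : Scat M) (f : hom A B) :
  is_iso (proj1_sig f) -> is_iso f.
Proof.
  destruct f as [f Hf]; simpl; intros [g [H1 H2]].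
  assert (Hg : Sx A ∘ g = Sx B).
  { rewrite <- Hf, <- comp_assoc, H2; apply comp_idr. }
  exists (@Shom_of M B A g Hg); split; apply sig_eq; simpl; assumption.
Qed.

Definition Stens (M : MonCat) (A B : Sob M) : Sob M :=
  existT _ (projT1 A ⊗ projT1 B)
    (exist _ (lu (munit M) ∘ (Sx A ⊗m Sx B))
       (iso_comp (lu_iso (munit M))
          (iso_tens (proj2_sig (projT2 A)) (proj2_sig (projT2 B))))).

Definition Stensf (M : MonCat) (A A' B B' : Sob M) (f : Shom A A') (g : Shom B B') :
  Shom (Stens A B) (Stens A' B').
Proof.
  exists (proj1_sig f ⊗m proj1_sig g).
  pose proof (proj2_sig f) as Hf; pose proof (proj2_sig g) as Hg;
  cbn.
  rewrite <- comp_assoc, <- tens_comp, Hf, Hg; reflexivity.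
Defined.

Definition Sunit (M : MonCat) : Sob M :=
  existT _ (munit M) (exist _ (idm (munit M)) (iso_id _)).

Definition Sassoc (M : MonCat) (A B C : Sob M) :
  Shom (Stens (Stens A B) C) (Stens A (Stens B C)).
Proof.
  exists (assoc (projT1 A) (projT1 B) (projT1 C)); cbn.
  set (I := munit M); set (x := Sx A); set (y := Sx B); set (z := Sx C).
  change (lu I ∘ (x ⊗m (lu I ∘ (y ⊗m z))) ∘ assoc (projT1 A) (projT1 B) (projT1 C)
          = lu I ∘ ((lu I ∘ (x ⊗m y)) ⊗m z)).
  assert (E : x ⊗m (lu I ∘ (y ⊗m z)) = (idm I ⊗m lu I) ∘ (x ⊗m (y ⊗m z))).
  { rewrite <- tens_comp, comp_idl; reflexivity. }
  rewrite E, <- !comp_assoc, <- assoc_nat, (comp_assoc (idm I ⊗m lu I)).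
  rewrite triangle, <- lu_ru_unit, <- tens_comp, comp_idl.
  reflexivity.
Defined.

Definition Slu (M : MonCat) (A : Sob M) : Shom (Stens (Sunit M) A) A.
Proof.
  exists (lu (projT1 A)); cbn; apply lu_nat.
Defined.

Definition Sru (M : MonCat) (A : Sob M) : Shom (Stens A (Sunit M)) A.
Proof.
  exists (ru (projT1 A)); cbn; rewrite ru_nat, lu_ru_unit; reflexivity.
Defined.

Definition S (M : MonCat) : MonCat.
Proof.
  refine {| mcat := Scat M; tens := @Stens M; tensf := @Stensf M;
            munit := Sunit M; assoc := @Sassoc M; lu := @Slu M; ru := @Sru M |};
  intros;
  try (apply S_iso; simpl;
       first [apply assoc_iso | apply lu_iso | apply ru_iso]);
  try (apply sig_eq; simpl).
  - apply tens_id.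
  - apply tens_comp.
  - apply assoc_nat.
  - apply lu_nat.
  - apply ru_nat.
  - apply pentagon.
  - apply triangle.
  - apply lu_ru_unit.
Defined.

Definition eps (M : MonCat) : MonFun (S M) M.
Proof.
  refine {| fob := fun A : S M => projT1 A;
            fmap := fun A B (f : hom A B) => proj1_sig f;
            fmu := fun A B => idm _; feps := idm _ |};
  intros; simpl; try apply iso_id; try reflexivity;
  rewrite ?tens_id, ?comp_idl, ?comp_idr; reflexivity.
Defined.

Definition Sbraid (M : SymMonCat) (A B : Sob M) : Shom (Stens A B) (Stens B A).
Proof.
  exists (braid (projT1 A) (projT1 B)); cbn.
  rewrite <- comp_assoc, <- braid_nat, comp_assoc, <- braid_unit, lu_ru_unit.
  reflexivity.
Defined.

Definition SS (M : SymMonCat) : SymMonCat.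
Proof.
  refine {| smc := S M; braid := @Sbraid M |}; intros; apply sig_eq; simpl.
  - apply braid_nat.
  - apply braid_invol.
  - apply hexagon.
  - apply braid_unit.
Defined.

(* A monoidal category Z with exactly one morphism between any two objects
   carries no information beyond its objects: every object map into Z is a
   strong monoidal functor, in exactly one way, and it is symmetric.  Hence a
   functor M -> Z factors uniquely through the identity-on-objects functor
   M -> R(M).  Dually, a strong monoidal F : Z -> M equips each F X with the
   isomorphism x_X = e_F^-1 ∘ F(!) : F X -> I, and this is the only structure
   making F factor through S(M) -> M: the unit constraint of a factorisation
   forces x_I ∘ e_F = id, and its action on the unique X -> I forces
   x_X = x_I ∘ F(!). *)
From Stdlib Require Import ProofIrrelevance IndefiniteDescription.

Set Implicit Arguments.
Unset Strict Implicit.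

Definition inhabitant (A : Type) (H : inhabited A) : A :=
  proj1_sig (constructive_indefinite_description (fun _ : A => True)
    (let 'inhabits a := H in ex_intro _ a I)).

Section Isomorphisms.
Variable C : Cat.

Definition iso_inv (X Y : C) (f : hom X Y) (H : is_iso f) : hom Y X :=
  proj1_sig (constructive_indefinite_description _ H).

Lemma iso_invK (X Y : C) (f : hom X Y) (H : is_iso f) : iso_inv H ∘ f = idm X.
Proof. exact (proj1 (proj2_sig (constructive_indefinite_description _ H))). Qed.

Lemma iso_Kinv (X Y : C) (f : hom X Y) (H : is_iso f) : f ∘ iso_inv H = idm Y.
Proof. exact (proj2 (proj2_sig (constructive_indefinite_description _ H))). Qed.

Lemma iso_inv_is_iso (X Y : C) (f : hom X Y) (H : is_iso f) : is_iso (iso_inv H).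
Proof. exists f; split; [apply iso_Kinv | apply iso_invK]. Qed.

Lemma iso_inv_unique (X Y : C) (f : hom X Y) (H : is_iso f) (g : hom Y X) :
  g ∘ f = idm X -> g = iso_inv H.
Proof.
  intros Hg.
  rewrite <- (comp_idr g), <- (iso_Kinv H), comp_assoc, Hg; apply comp_idl.
Qed.

Lemma iso_cancel_l (X Y Z : C) (f : hom Y Z) (g h : hom X Y) :
  is_iso f -> f ∘ g = f ∘ h -> g = h.
Proof.
  intros [f' [Hf _]] E.
  rewrite <- (comp_idl g), <- (comp_idl h), <- Hf, <- !comp_assoc, E.
  reflexivity.
Qed.

Lemma tr_comp (A A' B B' D D' : C) (ea : A = A') (eb : B = B') (ed : D = D')
  (g : hom B D) (f : hom A B) :
  tr ea ed (g ∘ f) = tr eb ed g ∘ tr ea eb f.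
Proof. destruct ea, eb, ed; reflexivity. Qed.

Lemma tr_id (A B : C) (ea : A = A) (eb : B = B) (f : hom A B) : tr ea eb f = f.
Proof.
  rewrite (proof_irrelevance _ ea eq_refl), (proof_irrelevance _ eb eq_refl).
  reflexivity.
Qed.
End Isomorphisms.

Lemma fmap_iso (M N : MonCat) (F : MonFun M N) (X Y : M) (f : hom X Y) :
  is_iso f -> is_iso (fmap F f).
Proof.
  intros [g [H1 H2]]; exists (fmap F g); split;
  rewrite <- fmap_comp; [rewrite H1 | rewrite H2]; apply fmap_id.
Qed.

Lemma fmap_lu_fmu (M N : MonCat) (F : MonFun M N) (g : hom (fob F (munit M)) (munit N))
  (X : M) :
  feps F ∘ g = idm _ ->
  fmap F (lu X) ∘ fmu F (munit M) X = lu (fob F X) ∘ (g ⊗m idm (fob F X)).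
Proof.
  intros Hg.
  rewrite <- (flu F X), <- !comp_assoc, <- tens_comp, Hg, comp_idl, tens_id.
  rewrite comp_idr; reflexivity.
Qed.

Section Thin.
Variables (C : MonCat) (HC : inZ C).

Lemma inZ_hom_unique (X Y : C) (f g : hom X Y) : f = g.
Proof. exact (proj2 (HC X Y) f g). Qed.

Definition inZ_hom (X Y : C) : hom X Y := inhabitant (proj1 (HC X Y)).

Lemma inZ_is_iso (X Y : C) (f : hom X Y) : is_iso f.
Proof. exists (inZ_hom Y X); split; apply inZ_hom_unique. Qed.
End Thin.

Section FunctorsIntoThin.
Variables (M N : MonCat) (HN : inZ N).

Definition inZ_monfun (F0 : M -> N) : MonFun M N.
Proof.
  refine {| fob := F0; fmap := fun X Y _ => inZ_hom HN (F0 X) (F0 Y);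
            fmu := fun X Y => inZ_hom HN _ _; feps := inZ_hom HN _ _ |};
  intros; solve [apply (inZ_hom_unique HN) | apply (inZ_is_iso HN)].
Defined.

Lemma mf_eq_inZ (G G' : MonFun M N) :
  (forall X, fob G X = fob G' X) -> mf_eq G G'.
Proof.
  intros e; exists e; repeat split; intros; apply (inZ_hom_unique HN).
Qed.
End FunctorsIntoThin.

Lemma mf_comp_eq_inZ (L M N : MonCat) (HN : inZ N) (G : MonFun M N) (F : MonFun L M)
  (H : MonFun L N) :
  (forall X, fob G (fob F X) = fob H X) -> mf_comp_eq G F H.
Proof.
  intros e; exists e; repeat split; intros; apply (inZ_hom_unique HN).
Qed.

Lemma mf_comp_eq_fob (L M N : MonCat) (G : MonFun M N) (F : MonFun L M)
  (H : MonFun L N) :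
  mf_comp_eq G F H -> forall X, fob G (fob F X) = fob H X.
Proof. intros [e _]; exact e. Qed.

Lemma is_sym_inZ (M N : SymMonCat) (HN : inZ N) (F : MonFun M N) : is_sym F.
Proof. intros X Y; apply (inZ_hom_unique HN). Qed.

Lemma is_sym_reflectionP (M Rm : SymMonCat) (eta : MonFun M Rm) :
  is_sym eta -> is_reflection eta -> is_sym_reflection eta.
Proof.
  intros Hsym [HRm Huniv]; split; [exact Hsym | split; [exact HRm |]].
  intros Z HZ F _; destruct (Huniv Z HZ F) as [[G HG] Huniq]; split.
  - exists G; split; [apply (is_sym_inZ HZ) | exact HG].
  - intros G1 G2 _ _; apply Huniq.
Qed.

Lemma is_sym_coreflectionP (M Sm : SymMonCat) (eps : MonFun Sm M) :
  is_sym eps -> is_coreflection eps -> is_sym_coreflection eps.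
Proof.
  intros Hsym [HSm Huniv]; split; [exact Hsym | split; [exact HSm |]].
  intros Z HZ F _; destruct (Huniv Z HZ F) as [[G HG] Huniq]; split.
  - exists G; split; [apply (is_sym_inZ HSm) | exact HG].
  - intros G1 G2 _ _; apply Huniq.
Qed.

Lemma inZ_R (M : MonCat) : inZ (R M).
Proof. intros X Y; split; [exact (inhabits tt) | intros [] []; reflexivity]. Qed.

Lemma eta_reflection (M : MonCat) : is_reflection (eta M).
Proof.
  split; [apply inZ_R |]; intros Z HZ F; split.
  - exists (inZ_monfun HZ (fob F : R M -> Z)).
    apply (mf_comp_eq_inZ HZ); reflexivity.
  - intros G G' HG HG'; apply (mf_eq_inZ HZ); intros X.
    exact (eq_trans (mf_comp_eq_fob HG X) (eq_sym (mf_comp_eq_fob HG' X))).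
Qed.

Lemma eta_is_sym (M : SymMonCat) : is_sym (M := M) (N := RS M) (eta M).
Proof. intros X Y; reflexivity. Qed.

Lemma Sob_eq (M : MonCat) (A B : Sob M) (p : projT1 A = projT1 B) :
  tr p eq_refl (Sx A) = Sx B -> A = B.
Proof.
  destruct A as [a [x hx]], B as [b [y hy]]; simpl in *; destruct p.
  intros Hxy; unfold Sx in Hxy; simpl in Hxy; subst y.
  f_equal; apply sig_eq; reflexivity.
Qed.

Lemma inZ_S (M : MonCat) : inZ (S M).
Proof.
  intros A B; split.
  - destruct (proj2_sig (projT2 B)) as [y' [_ Hy']].
    constructor; exists (y' ∘ Sx A).
    change (Sx B ∘ (y' ∘ Sx A) = Sx A).
    rewrite comp_assoc; unfold Sx at 1; rewrite Hy'; apply comp_idl.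
  - intros [f Hf] [g Hg]; apply sig_eq; simpl.
    apply (iso_cancel_l (proj2_sig (projT2 B))).
    change (Sx B ∘ f = Sx B ∘ g); rewrite Hf, Hg; reflexivity.
Qed.

Lemma inZ_hom_S_val (M : MonCat) (A B : S M) (f : hom (projT1 A) (projT1 B)) :
  Sx B ∘ f = Sx A -> proj1_sig (inZ_hom (@inZ_S M) A B) = f.
Proof.
  intros Hf; exact (f_equal (@proj1_sig _ _)
    (inZ_hom_unique (@inZ_S M) (inZ_hom (@inZ_S M) A B) (Shom_of Hf))).
Qed.

Section Coreflection.
Variables (M Z : MonCat) (HZ : inZ Z) (F : MonFun Z M).

Definition feps_inv : hom (fob F (munit Z)) (munit M) := iso_inv (feps_iso F).

Definition Fx (X : Z) : hom (fob F X) (munit M) :=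
  feps_inv ∘ fmap F (inZ_hom HZ X (munit Z)).

Lemma Fx_iso (X : Z) : is_iso (Fx X).
Proof.
  apply iso_comp; [apply iso_inv_is_iso | apply fmap_iso, (inZ_is_iso HZ)].
Qed.

Definition SFob (X : Z) : Sob M := existT _ (fob F X) (exist _ (Fx X) (Fx_iso X)).

Lemma Fx_fmap (X Y : Z) (f : hom X Y) : Fx Y ∘ fmap F f = Fx X.
Proof.
  unfold Fx; rewrite <- comp_assoc, <- fmap_comp.
  rewrite (inZ_hom_unique HZ (_ ∘ f) (inZ_hom HZ X (munit Z))); reflexivity.
Qed.

Lemma Fx_fmu (X Y : Z) :
  Fx (X ⊗ Y) ∘ fmu F X Y = lu (munit M) ∘ (Fx X ⊗m Fx Y).
Proof.
  unfold Fx.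
  rewrite (inZ_hom_unique HZ (inZ_hom HZ (X ⊗ Y) (munit Z))
             (lu (munit Z) ∘ (inZ_hom HZ X (munit Z) ⊗m inZ_hom HZ Y (munit Z)))).
  rewrite fmap_comp, <- !comp_assoc, fmu_nat.
  rewrite (comp_assoc (fmap F (lu (munit Z)))), (fmap_lu_fmu _ (iso_Kinv (feps_iso F))).
  fold feps_inv.
  rewrite !comp_assoc, lu_nat, <- !comp_assoc, <- !tens_comp, !comp_idl.
  reflexivity.
Qed.

Lemma Fx_feps : Fx (munit Z) ∘ feps F = idm (munit M).
Proof.
  unfold Fx; rewrite (inZ_hom_unique HZ _ (idm (munit Z))), fmap_id, comp_idr.
  apply iso_invK.
Qed.

Definition coreflect : MonFun Z (S M) := inZ_monfun (@inZ_S M) (SFob : Z -> S M).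

Lemma coreflect_factors : mf_comp_eq (eps M) coreflect F.
Proof.
  exists (fun X => eq_refl); repeat split; intros; cbn; rewrite ?comp_idr.
  - exact (@inZ_hom_S_val M (SFob X) (SFob Y) _ (Fx_fmap f)).
  - (* [f_equal2] is opaque, so the transport does not compute away *)
    rewrite tr_id.
    exact (@inZ_hom_S_val M (Stens (SFob X) (SFob Y)) (SFob (X ⊗ Y)) _ (Fx_fmu X Y)).
  - exact (@inZ_hom_S_val M (Sunit M) (SFob (munit Z)) _ Fx_feps).
Qed.

Section Factorisation.
Variables (G : MonFun Z (S M)) (e : forall X, projT1 (fob G X) = fob F X).
Hypothesis G_fmap : forall (X Y : Z) (f : hom X Y),
  tr (e X) (e Y) (proj1_sig (fmap G f)) = fmap F f.
Hypothesis G_feps : tr eq_refl (e (munit Z)) (proj1_sig (feps G) ∘ idm _) = feps F.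

Lemma factor_Sx_unit : tr (e (munit Z)) eq_refl (Sx (fob G (munit Z))) = feps_inv.
Proof.
  apply iso_inv_unique; rewrite <- G_feps, <- tr_comp, comp_idr; cbn [tr].
  exact (proj2_sig (feps G)).
Qed.

Lemma factor_Sx (X : Z) : tr (e X) eq_refl (Sx (fob G X)) = Fx X.
Proof.
  rewrite <- (proj2_sig (fmap G (inZ_hom HZ X (munit Z))) : Sx _ ∘ _ = _).
  rewrite (tr_comp (e X) (e (munit Z))), G_fmap, factor_Sx_unit; reflexivity.
Qed.

Lemma factor_fob (X : Z) : fob G X = SFob X.
Proof. exact (@Sob_eq M (fob G X) (SFob X) (e X) (factor_Sx X)). Qed.
End Factorisation.

Lemma coreflect_unique (G G' : MonFun Z (S M)) :
  mf_comp_eq (eps M) G F -> mf_comp_eq (eps M) G' F -> mf_eq G G'.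
Proof.
  intros [e [Hmap [_ Heps]]] [e' [Hmap' [_ Heps']]].
  apply (mf_eq_inZ (@inZ_S M)); intros X.
  rewrite (factor_fob Hmap Heps X), (factor_fob Hmap' Heps' X); reflexivity.
Qed.
End Coreflection.

Lemma eps_coreflection (M : MonCat) : is_coreflection (eps M).
Proof.
  split; [apply inZ_S |]; intros Z HZ F; split.
  - exists (coreflect HZ F); apply coreflect_factors.
  - apply (coreflect_unique HZ).
Qed.

Lemma eps_is_sym (M : SymMonCat) : is_sym (M := SS M) (N := M) (eps M).
Proof. intros X Y; cbn; rewrite comp_idr, comp_idl; reflexivity. Qed.

Theorem proposition9p3 :
  (forall M : MonCat, is_reflection (eta M)) /\
  (forall M : MonCat, is_coreflection (eps M)) /\
  (forall M : SymMonCat, is_sym_reflection (M := M) (Rm := RS M) (eta M)) /\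
  (forall M : SymMonCat, is_sym_coreflection (M := M) (Sm := SS M) (eps M)).
Proof.
  split; [exact eta_reflection |].
  split; [exact eps_coreflection |].
  split; intros M.
  - apply is_sym_reflectionP; [apply eta_is_sym | apply eta_reflection].
  - apply is_sym_coreflectionP; [apply eps_is_sym | apply eps_coreflection].
Qed.
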